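(* Let $\mathfrak{X}=(X,\{R_i\}_{i=0}^{d+1})$ be a commutative association scheme with $R_d^{\top}=R_{d+1}$ and $R_i^{\top}=R_i$ for $0\leq i\leq d-1$, and let $\tilde{\mathfrak{X}}=(X,\{\tilde R_i\}_{i=0}^{d})$ be its symmetrization, where $\tilde R_i=R_i$ for $0\le i\le d-1$ and $\tilde R_d=R_d\cup R_{d+1}$. Suppose that the graph $(X,R_d\cup R_{d+1})$ generates $\tilde{\mathfrak{X}}$. Then: (i) the adjacency matrix of the digraph $(X,R_d)$ has exactly $d+2$ distinct eigenvalues; (ii) the digraph $(X,R_d)$ generates the association scheme $\mathfrak{X}$.
   Context: A $d$-class association scheme $(X,\{R_i\}_{i=0}^d)$ consists of a finite set $X$ and a partition of $X\times X$ into nonempty relations $R_0,\dots,R_d$ such that $R_0=\{(x,x):x\in X\}$, each transpose $R_i^\top=\{(y,x):(x,y)\in R_i\}$ equals some $R_{i'}$, and for all $i,j,l$ the number of $z$ with $(x,z)\in R_i,(z,y)\in R_j$ is a constant $p_{i,j}^l$ whenever $(x,y)\in R_l$. It is commutative if $p^l_{i,j}=p^l_{j,i}$ for all $i,j,l$. The adjacency matrix $A_i$ of $R_i$ is the $X\times X$ $01$-matrix with $(x,y)$-entry $1$ iff $(x,y)\in R_i$; the Bose–Mesner algebra $\mathcal M$ is the complex algebra spanned by $A_0,\dots,A_d$. The symmetrization $(X,\{R_0\}\cup\{R_i\cup R_i^\top\})$ is again an association scheme. For a relation $R\subseteq X\times X$ not meeting the diagonal, $(X,R)$ is a digraph (a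 graph if $R$ is symmetric) whose adjacency matrix is the $01$-matrix of $R$, and its eigenvalues are those of that matrix. A (di)graph with adjacency matrix $A$ generates a commutative association scheme if $A$ generates its Bose–Mesner algebra $\mathcal M$, i.e. every element of $\mathcal M$ is a polynomial in $A$. *)

From HB Require Import structures.
From mathcomp Require Import all_boot all_order all_algebra all_field.
Set Implicit Arguments. Unset Strict Implicit. Unset Printing Implicit Defensive.
Import Order.TTheory GRing.Theory Num.Theory.
Local Open Scope ring_scope.

(* Vertex set X is modelled as 'I_N; a partition of X x X into n relations
   R_0..R_{n-1} is modelled by the map r : X -> X -> 'I_n, (x,y) \in R_i iff r x y = i. *)

Definition is_assoc_scheme (N n : nat) (r : 'I_N.+1 -> 'I_N.+1 -> 'I_n) : Prop :=
  [/\
      (exists i0 : 'I_n, i0 = 0%N :> nat /\ forall x y, (r x y == i0) = (x == y)),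
      (forall i : 'I_n, exists x y, r x y = i),
      (forall i : 'I_n, exists i' : 'I_n, forall x y, (r y x == i) = (r x y == i')) &
      (forall (i j : 'I_n) (x y x' y' : 'I_N.+1), r x y = r x' y' ->
         #|[set z | (r x z == i) && (r z y == j)]|
         = #|[set z | (r x' z == i) && (r z y' == j)]|)].

Definition is_commutative_scheme (N n : nat) (r : 'I_N.+1 -> 'I_N.+1 -> 'I_n) : Prop :=
  is_assoc_scheme r /\
  forall (i j : 'I_n) (x y : 'I_N.+1),
    #|[set z | (r x z == i) && (r z y == j)]| = #|[set z | (r x z == j) && (r z y == i)]|.

Definition adjmx (N n : nat) (r : 'I_N.+1 -> 'I_N.+1 -> 'I_n) (i : 'I_n) : 'M[algC]_N.+1 :=
  \matrix_(x, y) ((r x y == i)%:R).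

(* A generates the Bose-Mesner algebra span{A_0..A_{n-1}}: every element of it
   is a polynomial in A *)
Definition generates_BM (N n : nat) (r : 'I_N.+1 -> 'I_N.+1 -> 'I_n) (A : 'M[algC]_N.+1) : Prop :=
  forall c : 'I_n -> algC, exists p : {poly algC},
    horner_mx A p = \sum_(i < n) c i *: adjmx r i.

Definition num_distinct_eigenvalues (N : nat) (A : 'M[algC]_N.+1) (k : nat) : Prop :=
  exists s : seq algC, [/\ uniq s, size s = k & forall a, eigenvalue A a <-> a \in s].

Definition symmetrize (N d : nat) (r : 'I_N.+1 -> 'I_N.+1 -> 'I_d.+2) : 'I_N.+1 -> 'I_N.+1 -> 'I_d.+1 :=
  fun x y => inord (minn (r x y) d).

From mathcomp Require Import all_boot all_order all_algebra all_field.
Local Open Scope ring_scope.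

(* Since R_d^T = R_{d+1} and the scheme is commutative, A := A_d is a real
   normal matrix.  Hence its minimal polynomial has simple roots, and
   A^T = A_{d+1} = q(A) for any polynomial q interpolating complex conjugation
   on the spectrum of A.  Every element of the Bose-Mesner algebra M is an
   element of the symmetrized algebra, that is a polynomial in
   A + A^T = (X + q)(A), plus a multiple of A_{d+1} = q(A); so A generates M.
   The powers of A then span M, so the minimal polynomial of A has degree
   dim M = d + 2, and being separable it has d + 2 distinct roots. *)

Set Implicit Arguments.
Unset Strict Implicit.
Unset Printing Implicit Defensive.
Import GRing.Theory Num.Theory Num.Def.

Lemma poly_interpolation (F : fieldType) (s : seq F) (f : F -> F) :
  exists q : {poly F}, {in s, forall a, q.[a] = f a}.
Proof.
suff [q qf] : exists q : {poly F}, {in undup s, forall a, q.[a] = f a}.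
  by exists q => a sa; rewrite qf ?mem_undup.
elim: (undup s) (undup_uniq s) => [|b t IHt] /=; first by exists 0.
case/andP=> bt /IHt[q qf]; pose P := \prod_(c <- t) ('X - c%:P).
have Pb : P.[b] != 0.
  rewrite horner_prod prodf_seq_neq0; apply/allP => c ct /=.
  by rewrite hornerXsubC subr_eq0; apply: contraNneq bt => ->.
exists (q + ((f b - q.[b]) / P.[b]) *: P) => a; rewrite inE hornerD hornerZ.
case/predU1P=> [->|ta]; first by rewrite mulfVK // addrC subrK.
have -> : P.[a] = 0.
  by rewrite horner_prod (big_rem a) //= hornerXsubC subrr mul0r.
by rewrite mulr0 addr0 qf.
Qed.

Lemma horner_mx_comp (R : comNzRingType) n (A : 'M[R]_n.+1) (p q : {poly R}) :
  horner_mx A (p \Po q) = horner_mx (horner_mx A q) p.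
Proof.
elim/poly_ind: p => [|p c IHp]; first by rewrite comp_poly0 !rmorph0.
rewrite comp_polyD comp_polyM comp_polyX comp_polyC !rmorphD !rmorphM /=.
by rewrite !horner_mx_C horner_mx_X IHp.
Qed.

Section NormalMatrix.
Local Open Scope sesquilinear_scope.
Variables (C : numClosedFieldType) (n : nat) (A : 'M[C]_n.+1).
Hypothesis normalA : A \is normalmx.

Lemma normalmx_adjoint_poly : exists q : {poly C}, horner_mx A q = A ^t*.
Proof.
have /orthomx_spectralP A_eq := normalA.
set P := spectralmx A in A_eq; set D := spectral_diag A in A_eq.
have At_eq : A ^t* = invmx P *m diag_mx (map_mx conjC D) *m P.
  rewrite {1}A_eq !trmx_mul !map_mxM invmx_unitary ?spectral_unitarymx //.
  by rewrite trmxCK tr_diag_mx map_diag_mx mulmxA.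
have [q q_conj] := poly_interpolation [seq D 0 i | i <- enum 'I_n.+1] conjC.
exists q; rewrite At_eq {1}A_eq horner_mx_uconjC ?spectral_unit //.
rewrite horner_mx_diag; congr (_ *m diag_mx _ *m _).
by apply/rowP => i; rewrite !mxE q_conj ?map_f ?mem_enum.
Qed.

Lemma normalmx_mxminpoly_simple :
  exists2 s : seq C, uniq s & mxminpoly A = \prod_(a <- s) ('X - a%:P).
Proof.
have /orthomx_spectralP -> := normalA.
set P := spectralmx A; set D := spectral_diag A.
have Pinv_unit : invmx P \in unitmx by rewrite unitmx_inv spectral_unit.
exists (undup [seq D 0 i | i <- enum 'I_n.+1]); first exact: undup_uniq.
rewrite -mxminpoly_diag -(mxminpoly_uconj (diag_mx D) Pinv_unit).
by rewrite conjumx // invmxK.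
Qed.

End NormalMatrix.

Lemma normalmx_num_distinct_eigenvalues N (A : 'M[algC]_N.+1) :
  A \is normalmx -> num_distinct_eigenvalues A (degree_mxminpoly A).
Proof.
move=> /normalmx_mxminpoly_simple[s s_uniq minA]; exists s; split=> //.
  by apply: succn_inj; rewrite -size_mxminpoly minA size_prod_XsubC.
by move=> a; rewrite eigenvalue_root_min minA root_prod_XsubC.
Qed.

Section BoseMesner.
Variables (N n : nat) (r : 'I_N.+1 -> 'I_N.+1 -> 'I_n).
Local Notation A := (adjmx r).

Definition bose_mesner_mx : 'M[algC]_(n, N.+1 * N.+1) := \matrix_i mxvec (A i).
Local Notation BM := bose_mesner_mx.

Lemma adjmx_mul_entry i j x y :
  (A i *m A j) x y = #|[set z | (r x z == i) && (r z y == j)]|%:R.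
Proof.
rewrite mxE -sum1_card natr_sum [RHS]big_mkcond; apply: eq_bigr => z _.
by rewrite !mxE inE -natrM mulnb; case: (_ && _).
Qed.

Lemma lincomb_adjmx_entry (c : 'I_n -> algC) x y :
  (\sum_l c l *: A l) x y = c (r x y).
Proof.
rewrite summxE (bigD1 (r x y)) //= big1 => [|l /negPf neq_l].
  by rewrite !mxE eqxx mulr1 addr0.
by rewrite !mxE eq_sym neq_l mulr0.
Qed.

Lemma adjmx_in_BM i : (mxvec (A i) <= BM)%MS.
Proof. by rewrite -(rowK (fun i => mxvec (A i))) row_sub. Qed.

Lemma lincomb_in_BM (c : 'I_n -> algC) : (mxvec (\sum_l c l *: A l) <= BM)%MS.
Proof.
rewrite linear_sum /=; apply: summx_sub => l _.
by rewrite linearZ /= scalemx_sub ?adjmx_in_BM.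
Qed.

Lemma BM_lincomb X :
  (mxvec X <= BM)%MS -> exists c : 'I_n -> algC, X = \sum_l c l *: A l.
Proof.
case/submxP => u Xu; exists (u 0); apply: (can_inj mxvecK).
rewrite Xu mulmx_sum_row linear_sum /=; apply: eq_bigr => l _.
by rewrite linearZ /= rowK.
Qed.

Lemma adjmx_adjoint i : ((A i) ^t* = (A i)^T)%sesqui.
Proof. by apply/matrixP => x y; rewrite !mxE conjC_nat. Qed.

Lemma trmx_adjmx i j :
  (forall x y, (r y x == i) = (r x y == j)) -> (A i)^T = A j.
Proof. by move=> tr_ij; apply/matrixP => x y; rewrite !mxE tr_ij. Qed.

Section AssocScheme.
Hypothesis scheme_r : is_assoc_scheme r.

Lemma relation_witnesses :
  exists w : 'I_n -> 'I_N.+1 * 'I_N.+1, forall i, r (w i).1 (w i).2 = i.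
Proof.
case: scheme_r => _ nonempty _ _.
suff pick_pair i : exists xy : 'I_N.+1 * 'I_N.+1, r xy.1 xy.2 = i.
  exact: fin_all_exists pick_pair.
by have [x [y <-]] := nonempty i; exists (x, y).
Qed.

Lemma one_in_BM : (mxvec 1%:M <= BM)%MS.
Proof.
case: scheme_r => [[i0 [_ diag_i0]] _ _ _].
suff <- : A i0 = 1%:M by apply: adjmx_in_BM.
by apply/matrixP => x y; rewrite !mxE diag_i0.
Qed.

Lemma adjmx_mul_in_BM i j : (mxvec (A i *m A j) <= BM)%MS.
Proof.
have [w rw] := relation_witnesses; case: scheme_r => _ _ _ pij.
pose c l : algC := #|[set z | (r (w l).1 z == i) && (r z (w l).2 == j)]|%:R.
suff -> : A i *m A j = \sum_l c l *: A l by apply: lincomb_in_BM.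
apply/matrixP => x y; rewrite adjmx_mul_entry lincomb_adjmx_entry /c.
by rewrite (pij _ _ x y (w (r x y)).1 (w (r x y)).2) ?rw.
Qed.

Lemma mulmx_in_BM X Y :
  (mxvec X <= BM)%MS -> (mxvec Y <= BM)%MS -> (mxvec (X *m Y) <= BM)%MS.
Proof.
move=> /BM_lincomb[c ->] /BM_lincomb[e ->].
rewrite mulmx_suml linear_sum /=; apply: summx_sub => l _.
rewrite mulmx_sumr linear_sum /=; apply: summx_sub => m _.
by rewrite -scalemxAl -scalemxAr !linearZ /= !scalemx_sub ?adjmx_mul_in_BM.
Qed.

Lemma rank_BM : \rank BM = n.
Proof.
have [w rw] := relation_witnesses.
pose Q : 'M[algC]_(N.+1 * N.+1, n) :=
  \matrix_(k, j) (k == mxvec_index (w j).1 (w j).2)%:R.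
have BMQ : BM *m Q = 1%:M.
  apply/matrixP => i j; rewrite !mxE (bigD1 (mxvec_index (w j).1 (w j).2)) //=.
  rewrite big1 => [|k /negPf nk]; last by rewrite !mxE nk mulr0.
  by rewrite !mxE eqxx mulr1 addr0 mxvecE mxE rw eq_sym.
apply/eqP; rewrite eqn_leq rank_leq_row /=.
by rewrite -{1}(mxrank1 algC n) -BMQ mxrankM_maxl.
Qed.

Lemma degree_mxminpoly_BM_generator (B : 'M[algC]_N.+1) :
  (mxvec B <= BM)%MS -> generates_BM r B -> degree_mxminpoly B = n.
Proof.
move=> B_BM gen_B; set k := degree_mxminpoly B.
have <- : \rank (powers_mx B k) = k := eqnP (minpoly_mx_free B).
rewrite -rank_BM; apply/eqmx_rank; apply/andP; split; apply/row_subP => i.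
  rewrite rowK; elim: (nat_of_ord i) => [|m IHm].
    by rewrite expr0 one_in_BM.
  by rewrite exprSr -mulmxE mulmx_in_BM.
rewrite rowK; have [p p_Ai] := gen_B (fun l => (l == i)%:R).
suff -> : A i = horner_mx B p by apply: horner_mx_mem.
by rewrite p_Ai; apply/matrixP => x y; rewrite lincomb_adjmx_entry mxE.
Qed.

End AssocScheme.

Lemma adjmx_normal i : is_commutative_scheme r -> A i \is normalmx.
Proof.
case=> -[_ _ tr _] pC; have [i' tr_i] := tr i.
apply/normalmxP; rewrite adjmx_adjoint (trmx_adjmx tr_i).
by apply/matrixP => x y; rewrite !adjmx_mul_entry pC.
Qed.

End BoseMesner.

Section Symmetrization.
Variables (N d : nat) (r : 'I_N.+1 -> 'I_N.+1 -> 'I_d.+2).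

Lemma ord_top2P (k : 'I_d.+2) : [\/ (k < d)%N, k = inord d | k = inord d.+1].
Proof.
case: (ltngtP k d) => [lt_kd|gt_kd|eq_kd];
  [by constructor 1|constructor 3|constructor 2];
  apply/val_inj; rewrite /= inordK //.
by apply/eqP; rewrite eqn_leq -ltnS ltn_ord.
Qed.

Lemma inord_top2_neq : (inord d : 'I_d.+2) != inord d.+1.
Proof. by rewrite -(inj_eq val_inj) /= !inordK // ltn_eqF. Qed.

Lemma symmetrize_val x y : symmetrize r x y = minn (r x y) d :> nat.
Proof. by rewrite /symmetrize inordK // ltnS geq_minr. Qed.

Lemma adjmx_symmetrize_max :
  adjmx (symmetrize r) ord_max = adjmx r (inord d) + adjmx r (inord d.+1).
Proof.
apply/matrixP => x y; rewrite !mxE -natrD -!(inj_eq val_inj) /=.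
rewrite !inordK ?ltnS ?geq_minr //; congr _%:R.
case: (ord_top2P (r x y)) => [lt_rd|->|->]; rewrite ?inordK //.
- by rewrite (minn_idPl (ltnW lt_rd)) (ltn_eqF lt_rd) (ltn_eqF (leqW lt_rd)).
- by rewrite minnn eqxx ltn_eqF.
- by rewrite (minn_idPr (leqnSn d)) (gtn_eqF (ltnSn d)) !eqxx.
Qed.

Lemma lincomb_adjmx_symmetrize (c : 'I_d.+2 -> algC) :
  \sum_(i < d.+2) c i *: adjmx r i =
  \sum_(i < d.+1) c (inord i) *: adjmx (symmetrize r) i
    - (c (inord d) - c (inord d.+1)) *: adjmx r (inord d.+1).
Proof.
apply/matrixP => x y; rewrite !mxE !lincomb_adjmx_entry symmetrize_val.
case: (ord_top2P (r x y)) => [lt_rd|->|->].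
- rewrite (minn_idPl (ltnW lt_rd)) inord_val -(inj_eq val_inj) /= inordK //.
  by rewrite (ltn_eqF (leqW lt_rd)) mulr0 subr0.
- by rewrite inordK // minnn (negPf inord_top2_neq) mulr0 subr0.
- by rewrite inordK // (minn_idPr (leqnSn d)) eqxx mulr1 opprB addrC subrK.
Qed.

Lemma generates_BM_of_symmetrize (q : {poly algC}) :
  horner_mx (adjmx r (inord d)) q = adjmx r (inord d.+1) ->
  generates_BM (symmetrize r) (adjmx (symmetrize r) ord_max) ->
  generates_BM r (adjmx r (inord d)).
Proof.
move=> Aq gen_sym c; have [p Ap] := gen_sym (fun i => c (inord i)).
exists (p \Po ('X + q) - (c (inord d) - c (inord d.+1)) *: q).
rewrite rmorphB /= horner_mxZ horner_mx_comp rmorphD /= horner_mx_X Aq.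
by rewrite -adjmx_symmetrize_max Ap lincomb_adjmx_symmetrize.
Qed.

End Symmetrization.

Theorem theorem1p2 (N d : nat) (r : 'I_N.+1 -> 'I_N.+1 -> 'I_d.+2) :
  is_commutative_scheme r ->
  (forall x y, (r x y == d :> nat) = (r y x == d.+1 :> nat)) ->
  (forall x y, (r x y < d)%N -> r y x = r x y) ->
  generates_BM (symmetrize r) (adjmx (symmetrize r) ord_max) ->
  num_distinct_eigenvalues (adjmx r (inord d)) d.+2 /\
  generates_BM r (adjmx r (inord d)).
Proof.
move=> comm_r tr_d _ gen_sym; set A := adjmx r (inord d).
have scheme_r : is_assoc_scheme r by case: comm_r.
have normalA : A \is normalmx by apply: adjmx_normal.
have At : A^T = adjmx r (inord d.+1).
  by apply: trmx_adjmx => x y; rewrite -!(inj_eq val_inj) /= !inordK // tr_d.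
have [q Aq] := normalmx_adjoint_poly normalA.
have gen_A : generates_BM r A.
  apply: (generates_BM_of_symmetrize (q := q)) gen_sym.
  by rewrite Aq adjmx_adjoint At.
have deg_A := degree_mxminpoly_BM_generator scheme_r (adjmx_in_BM r _) gen_A.
by split=> //; rewrite -deg_A; apply: normalmx_num_distinct_eigenvalues.
Qed.
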